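(* Let $K$ be a semigroup, $(X,\|\cdot\|)$ a seminormed space, and $U_g:X\to X$ a linear map for each $g\in K$ such that $U_gU_h=U_{gh}$ and $\|U_gx\|\ge\|x\|$ for all $g,h\in K$ and $x\in X$. Suppose that $B_{x_0}:=\{U_gx_0:g\in K\}$ is totally bounded in $(X,\|\cdot\|)$ for some $x_0\in X$. Then for each $\varepsilon>0$ the set \[ E:=\{g\in K:\|U_gx_0-x_0\|<\varepsilon\} \] is relatively dense in $K$.
   Context: A set $E\subset K$ is relatively dense in the semigroup $K$ if there exist $r\in\mathbb{N}$ and $g_1,\dots,g_r\in K$ such that $E\cap\{gg_1,\dots,gg_r\}\neq\varnothing$ for all $g\in K$. A set $B$ is totally bounded in a pseudometric space if for every $\varepsilon>0$ there is a finite set $F$ with every point of $B$ at distance $<\varepsilon$ from some point of $F$. *)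

From mathcomp Require Import all_boot all_order all_algebra.
Set Implicit Arguments. Unset Strict Implicit. Unset Printing Implicit Defensive.
Import Order.TTheory GRing.Theory Num.Theory.
Local Open Scope ring_scope.

Definition seminorm (F : numFieldType) (X : lmodType F) (nrm : X -> F) : Prop :=
  [/\ forall x, 0 <= nrm x,
      forall (a : F) x, nrm (a *: x) = `|a| * nrm x
    & forall x y, nrm (x + y) <= nrm x + nrm y].

Definition totally_bounded (F : numFieldType) (X : lmodType F) (nrm : X -> F)
    (B : X -> Prop) : Prop :=
  forall eps : F, 0 < eps ->
    exists Fs : seq X, forall b, B b -> exists2 f, f \in Fs & nrm (b - f) < eps.

Definition relatively_dense (K : Type) (mul : K -> K -> K) (E : K -> Prop) : Prop :=
  exists (r : nat) (gs : r.-tuple K),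
    forall g : K, exists i : 'I_r, E (mul g (tnth gs i)).

From mathcomp Require Import all_boot all_order all_algebra.
From mathcomp Require Import zify.
From Stdlib Require Import Classical.
Set Implicit Arguments.
Unset Strict Implicit.
Unset Printing Implicit Defensive.
Import Order.TTheory GRing.Theory Num.Theory.
Local Open Scope ring_scope.

(* Suppose the finite set s of return shifts fails: some g has
   ||U_{g h} x0 - x0|| >= eps for every h in s.  Since each U_g expands the
   seminorm, the orbit points of g and of g g h (h in s) are then pairwise
   eps-apart, as soon as those of s are.  So a failing s yields a strictly
   longer eps-separated subset of the orbit; by total boundedness such subsets
   have bounded length, hence some s must succeed. *)

Section Seminorm.
Variables (F : numFieldType) (X : lmodType F) (nrm : X -> F).
Hypothesis nrm_seminorm : seminorm nrm.

Lemma seminorm_ge0 x : 0 <= nrm x.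
Proof. by case: nrm_seminorm. Qed.

Lemma seminormBC x y : nrm (x - y) = nrm (y - x).
Proof.
case: nrm_seminorm => _ nrmZ _.
by rewrite -opprB -(scaleN1r (y - x)) nrmZ normrN normr1 mul1r.
Qed.

Definition separated (T : Type) (phi : T -> X) (eps : F) (s : seq T) :=
  pairwise (fun a b => eps <= nrm (phi a - phi b)) s.

(* Two points of an eps-separated family never share an eps/2-ball. *)
Lemma separated_size_le_cover (T : Type) (phi : T -> X) (eps : F)
    (centers : seq X) (s : seq T) :
  0 < eps -> separated phi eps s ->
  all (fun a => has (fun f => nrm (phi a - f) < eps / 2%:R) centers) s ->
  (size s <= size centers)%N.
Proof.
move=> eps_gt0; elim: centers s => [|f centers IH] s sep_s cover_s.
  by case: s sep_s cover_s => //= a s _; rewrite andbC.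
set near_f := fun a => nrm (phi a - f) < eps / 2%:R.
rewrite -(count_predC near_f s) -!size_filter /= -add1n.
apply: leq_add; last first.
  apply: IH; first exact: pairwise_filter.
  rewrite all_filter; apply: sub_all cover_s => a /=.
  by rewrite /near_f; case: (_ < _).
have := pairwise_filter near_f sep_s; have := filter_all near_f s.
case: [seq a <- s | near_f a] => [|a [|b t]] //=.
move=> /and3P[near_a near_b _] /and3P[/andP[sep_ab _] _ _]; exfalso; move: sep_ab.
apply/negP; rewrite -real_ltNge ?ger0_real ?seminorm_ge0 ?ltW //.
apply: (le_lt_trans (y := nrm (phi a - f) + nrm (f - phi b))).
  by case: nrm_seminorm => _ _ /(_ (phi a - f) (f - phi b)); rewrite addrA subrK.
by rewrite (seminormBC f) [ltRHS]splitr ltrD.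
Qed.

Lemma separated_size_bounded (T : Type) (phi : T -> X) (eps : F) :
  totally_bounded nrm (fun y => exists t, y = phi t) -> 0 < eps ->
  exists n, forall s, separated phi eps s -> (size s <= n)%N.
Proof.
move=> tb eps_gt0.
have [centers cover] := tb (eps / 2%:R) (divr_gt0 eps_gt0 (ltr0n _ 2)).
exists (size centers) => s sep_s.
apply: (separated_size_le_cover eps_gt0 sep_s).
elim: s {sep_s} => //= a s ->; rewrite andbT.
by have [f f_in near_f] := cover (phi a) (ex_intro _ a erefl); apply/hasP; exists f.
Qed.

End Seminorm.

Lemma bounded_growth (T : Type) (Q R : seq T -> Prop) (n : nat) :
  (forall s, Q s -> (size s <= n)%N) -> Q [::] ->
  (forall s, Q s -> ~ R s -> exists2 s', Q s' & (size s < size s')%N) ->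
  exists2 s, Q s & R s.
Proof.
move=> Q_bounded Q_nil grow.
suff: forall d s, Q s -> (n - size s <= d)%N -> exists2 s, Q s & R s.
  by move/(_ n [::] Q_nil); apply; rewrite subn0.
elim=> [|d IH] s Q_s le_d;
  have [R_s | /(grow s Q_s)[s' Q_s' lt_s]] := classic (R s); try by exists s.
  by have := Q_bounded s' Q_s'; lia.
by apply: (IH s') => //; lia.
Qed.

Section ExpansiveAction.
Variables (F : numFieldType) (X : lmodType F) (nrm : X -> F).
Variables (K : Type) (mul : K -> K -> K) (U : K -> {linear X -> X}) (x0 : X).
Hypothesis nrm_seminorm : seminorm nrm.
Hypothesis mulA : forall g h k, mul g (mul h k) = mul (mul g h) k.
Hypothesis U_mul : forall g h x, U g (U h x) = U (mul g h) x.
Hypothesis U_expanding : forall g x, nrm x <= nrm (U g x).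

Let orbit g := U g x0.

Lemma orbit_dist_mull g a b :
  nrm (orbit a - orbit b) <= nrm (orbit (mul g a) - orbit (mul g b)).
Proof. by rewrite /orbit -!U_mul -raddfB U_expanding. Qed.

Definition returns_from (eps : F) (s : seq K) :=
  forall g, has (fun h => nrm (orbit (mul g h) - x0) < eps) s.

Lemma relatively_dense_returns eps s :
  returns_from eps s -> relatively_dense mul (fun g => nrm (orbit g - x0) < eps).
Proof.
move=> ret; exists (size s), (in_tuple s) => g.
have /(has_nthP g)[i lt_i near_i] := ret g.
by exists (Ordinal lt_i); rewrite (tnth_nth g).
Qed.

Lemma orbit_dist_base g h :
  nrm (orbit (mul g h) - x0) <= nrm (orbit g - orbit (mul g (mul g h))).
Proof.
by rewrite seminormBC // /orbit -[U (mul g (mul g h)) x0]U_mul -raddfB U_expanding.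
Qed.

Lemma separated_grow eps s g :
  separated nrm orbit eps s ->
  all (fun h => eps <= nrm (orbit (mul g h) - x0)) s ->
  separated nrm orbit eps (g :: [seq mul g (mul g h) | h <- s]).
Proof.
move=> sep_s far; rewrite /separated pairwise_cons pairwise_map all_map.
apply/andP; split.
  by apply: sub_all far => h /= /le_trans; apply; apply: orbit_dist_base.
apply: sub_pairwise sep_s => a b /= /le_trans; apply.
rewrite !mulA; apply: le_trans (orbit_dist_mull _ _ _) _.
by rewrite -!mulA; apply: orbit_dist_mull.
Qed.

End ExpansiveAction.

Theorem proposition5p6 (F : numFieldType) (X : lmodType F) (nrm : X -> F)
  (K : Type) (mul : K -> K -> K) (U : K -> {linear X -> X}) (x0 : X) :
  seminorm nrm ->
  (forall g h k : K, mul g (mul h k) = mul (mul g h) k) ->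
  (forall (g h : K) (x : X), U g (U h x) = U (mul g h) x) ->
  (forall (g : K) (x : X), nrm x <= nrm (U g x)) ->
  totally_bounded nrm (fun y => exists g : K, y = U g x0) ->
  forall eps : F, 0 < eps ->
    relatively_dense mul (fun g => nrm (U g x0 - x0) < eps).
Proof.
move=> nrm_seminorm mulA U_mul U_expanding orbit_tb eps eps_gt0.
have [n sep_bounded] := separated_size_bounded nrm_seminorm orbit_tb eps_gt0.
have [s _ ret] : exists2 s, separated nrm (fun g => U g x0) eps s
                          & returns_from nrm mul U x0 eps s.
  apply: (bounded_growth sep_bounded) => // s sep_s.
  move=> /not_all_ex_not[g /negP]; rewrite -all_predC => far.
  exists (g :: [seq mul g (mul g h) | h <- s]); last by rewrite /= size_map.
  apply: separated_grow => //; apply: sub_all far => h /=.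
  by rewrite real_leNgt ?ger0_real ?seminorm_ge0 ?ltW.
exact: relatively_dense_returns ret.
Qed.
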